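(* Let $m\ge7$ with $m\equiv3\pmod4$, let $N=3^m-1$ and $v=\frac{3^m-1}{2}+3^{(m-1)/2}-1$. Then $\gcd(v,N)=1$, and for every integer $i$ with $0\le i\le\frac{3^{(m-1)/2}+1}{4}$, the $3$-weight of $v(1+2i)\bmod N$ is congruent to $3$ modulo $4$ (i.e. the $3$-adic digit vector of $v(1+2i)\bmod N$ lies in $S_3(m)$).
   Context: For an integer $i$, $i\bmod N$ is the unique $s\in\{0,\dots,N-1\}$ with $N\mid i-s$. For $0\le s\le 3^m-1$ with $3$-adic expansion $s=\sum_{j=0}^{m-1}s_j3^j$, $s_j\in\{0,1,2\}$, the $3$-weight is $\mathrm{wt}_3(s)=\sum_j s_j$. $S_j(m)=\{(i_0,\dots,i_{m-1})\in\{0,1,2\}^m:\sum i_k\equiv j\pmod 4\}$. *)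

From mathcomp Require Import all_boot.
Set Implicit Arguments. Unset Strict Implicit. Unset Printing Implicit Defensive.

Definition digit3 (s j : nat) : nat := (s %/ 3 ^ j) %% 3.

Definition wt3 (m s : nat) : nat := \sum_(j < m) digit3 s j.

(* Write [K = 3^k = 2o + 1] and [m = 2k + 1], and let [R = (3^m - 1)/2] be the
   base-3 repunit of length [m], so that [N = 2R] and [v = R + 2o].  For odd
   [c = 1 + 2i] we have [vc = R + 2oc (mod N)], and in base 3
   [R + 2oc = (o - c) + K (o + c) + K^2] when [c <= o], while for [c = o + 2] it is
   [(K - 2) + 2 K^2].  Since [(o - c) + (o + c) = K - 1 = 22...2] in base 3, the two
   low blocks have complementary digits, so the weight is [2k + 1 = m] in both
   cases.  Coprimality holds because [R = 6o^2 + 6o + 1] is odd and [1] modulo [o]. *)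

From mathcomp Require Import all_boot zify ring.

Lemma wt3_0 n : wt3 n 0 = 0.
Proof. by rewrite /wt3 big1 // => j _; rewrite /digit3 div0n. Qed.

Lemma wt3_digit d : d < 3 -> wt3 1 d = d.
Proof. by move=> d_lt3; rewrite /wt3 big_ord1 /digit3 expn0 divn1 modn_small. Qed.

Lemma wt3_cat a b x y :
  x < 3 ^ a -> wt3 (a + b) (x + 3 ^ a * y) = wt3 a x + wt3 b y.
Proof.
move=> x_lt; rewrite /wt3 big_split_ord /=; congr (_ + _); apply: eq_bigr => j _.
- have j_lt_a : j < a := ltn_ord j.
  have -> : 3 ^ a * y = 3 ^ (a - j) * y * 3 ^ j by rewrite mulnAC -expnD subnK // ltnW.
  have three_dvd : 3 %| 3 ^ (a - j) * y by rewrite dvdn_mulr // dvdn_exp // subn_gt0.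
  by rewrite /digit3 addnC divnMDl ?expn_gt0 // -modnDml (eqP three_dvd).
- by rewrite /digit3 expnD divnMA addnC mulnC divnMDl ?expn_gt0 // (divn_small x_lt) addn0.
Qed.

Lemma wt3_1 n : 0 < n -> wt3 n 1 = 1.
Proof.
case: n => // n _.
by have := wt3_cat 1 n 1 0 (isT : 1 < 3); rewrite muln0 addn0 wt3_digit // wt3_0.
Qed.

(* All digits of [3^n - 1] are [2], so the addition [A + B] has no carries. *)
Lemma wt3_compl n A B : A + B = 3 ^ n - 1 -> wt3 n A + wt3 n B = 2 * n.
Proof.
elim: n A B => [|n IHn] A B sum_AB; first by rewrite /wt3 !big_ord0.
have pow3S : 3 ^ n.+1 = 3 * 3 ^ n by rewrite expnS.
have [low_sum high_sum] : A %% 3 + B %% 3 = 2 /\ A %/ 3 + B %/ 3 = 3 ^ n - 1.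
  by move: (divn_eq A 3) (divn_eq B 3) (ltn_pmod A (isT : 0 < 3)) (ltn_pmod B (isT : 0 < 3)); lia.
have base3 X : X = X %% 3 + 3 ^ 1 * (X %/ 3) by rewrite addnC mulnC -divn_eq.
rewrite -add1n {1}(base3 A) {1}(base3 B) !wt3_cat ?wt3_digit ?ltn_mod //.
by move: (IHn _ _ high_sum); lia.
Qed.

Definition repunit3 n := (3 ^ n - 1) %/ 2.

Lemma repunit3_double n : 2 * repunit3 n = 3 ^ n - 1.
Proof.
by rewrite /repunit3 mulnC divnK // dvdn2 oddB ?expn_gt0 // oddX orbT.
Qed.

Lemma pow3_repunit3 n : 3 ^ n = 2 * repunit3 n + 1.
Proof. by rewrite repunit3_double subnK ?expn_gt0. Qed.

Lemma repunit3_cat a b : repunit3 (a + b) = repunit3 a + 3 ^ a * repunit3 b.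
Proof.
apply/eqP; rewrite -(eqn_pmul2l (isT : 0 < 2)) mulnDr mulnCA !repunit3_double expnD.
by move: (expn_gt0 3 a) (expn_gt0 3 b); move: (3 ^ a) (3 ^ b) => X Y; nia.
Qed.

Lemma odd_repunit3 n : odd (repunit3 n) = odd n.
Proof.
elim: n => [|n IHn]; first by [].
by rewrite -add1n repunit3_cat /= oddD oddM IHn.
Qed.

Lemma coprime_add_double R o :
  odd R -> o %| R.-1 -> coprime (R + 2 * o) (2 * R).
Proof.
move=> R_odd /dvdnP[q R_pred].
have R_eq : R = q * o + 1 by rewrite -R_pred addn1 prednK // odd_gt0.
have coprime_R_o : coprime R o by rewrite coprime_sym /coprime R_eq gcdnMDl gcdn1.
rewrite coprimeMr coprimen2 oddD oddM R_odd /=.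
rewrite coprime_sym /coprime gcdnDl -/(coprime R _).
by rewrite coprimeMr coprime_R_o coprimen2 R_odd.
Qed.

Lemma modn_odd_mul_add R i x :
  x < R -> (R * (1 + 2 * i) + x) %% (2 * R) = R + x.
Proof.
move=> x_lt; have -> : R * (1 + 2 * i) + x = i * (2 * R) + (R + x) by ring.
by rewrite modnMDl modn_small // mul2n -addnn ltn_add2l.
Qed.

Lemma repunit3_odd_length k :
  repunit3 (2 * k + 1) = repunit3 k + 3 ^ k * (repunit3 k + 3 ^ k).
Proof. by rewrite mul2n -addnn -addnA !repunit3_cat (_ : repunit3 1 = 1) ?muln1. Qed.

Lemma wt3_repunit3_add k c : odd (repunit3 k) -> odd c -> c <= repunit3 k + 2 ->
  wt3 (2 * k + 1) (repunit3 (2 * k + 1) + 2 * repunit3 k * c) = 2 * k + 1.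
Proof.
rewrite repunit3_odd_length mul2n -addnn -addnA.
have := pow3_repunit3 k; set o := repunit3 k => pow3_k o_odd c_odd c_le.
have [c_le_o | c_gt_o] := leqP c o.
- have -> : o + 3 ^ k * (o + 3 ^ k) + 2 * o * c = (o - c) + 3 ^ k * ((o + c) + 3 ^ k * 1).
    by rewrite pow3_k; nia.
  rewrite !wt3_cat ?wt3_digit ?pow3_k; try lia.
  by rewrite addnA wt3_compl ?pow3_k; lia.
- have c_ne : c != o + 1 by apply: contraTneq c_odd => ->; rewrite addn1 /= o_odd.
  have o_gt0 : 0 < o by rewrite odd_gt0.
  have k_gt0 : 0 < k by rewrite lt0n; apply: contraTneq o_gt0 => k0; rewrite /o k0.
  have c_eq : c = o + 2 by lia.
  have -> : o + 3 ^ k * (o + 3 ^ k) + 2 * o * c = (3 ^ k - 2) + 3 ^ k * (0 + 3 ^ k * 2).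
    by rewrite c_eq pow3_k; nia.
  rewrite !wt3_cat ?wt3_digit ?wt3_0 ?pow3_k; try lia.
  have := @wt3_compl k (3 ^ k - 2) 1; rewrite (wt3_1 _ k_gt0) pow3_k; lia.
Qed.

Theorem lemma43 (m : nat) :
  7 <= m -> m %% 4 = 3 ->
  let N := 3 ^ m - 1 in
  let v := (3 ^ m - 1) %/ 2 + 3 ^ ((m - 1) %/ 2) - 1 in
  gcdn v N = 1 /\
  (forall i : nat, i <= (3 ^ ((m - 1) %/ 2) + 1) %/ 4 ->
     wt3 m ((v * (1 + 2 * i)) %% N) %% 4 = 3).
Proof.
move=> m_ge7 m_mod4 N v.
have [k m_eq k_odd] : exists2 k, m = 2 * k + 1 & odd k.
  by exists (m %/ 2); [lia | have := modn2 (m %/ 2); case: odd => //=; lia].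
have half_m : (m - 1) %/ 2 = k by lia.
set o := repunit3 k.
have o_odd : odd o by rewrite odd_repunit3.
have R_eq : repunit3 m = (6 * o + 6) * o + 1.
  by rewrite m_eq repunit3_odd_length pow3_repunit3 -/o; ring.
have N_eq : N = 2 * repunit3 m by rewrite repunit3_double.
have v_eq : v = repunit3 m + 2 * o.
  by rewrite /v -/(repunit3 m) half_m pow3_repunit3 -/o addnA addnK.
split.
- apply/eqP; rewrite v_eq N_eq; apply: coprime_add_double.
    by rewrite odd_repunit3 m_eq oddD oddM /=.
  by rewrite R_eq addn1 /= dvdn_mull.
- move=> i; rewrite half_m pow3_repunit3 -/o => i_le.
  have shift_lt : 2 * o * (1 + 2 * i) < repunit3 m by rewrite R_eq; nia.
  rewrite v_eq mulnDl N_eq modn_odd_mul_add // m_eq wt3_repunit3_add //.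
  - lia.
  - by rewrite oddD oddM /=.
  - lia.
Qed.
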